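(* Let $\varphi=\ell(p_1)\wedge\dots\wedge\ell(p_n)$, where the $p_i\in At$ are distinct and each $\ell(p_i)\in\{p_i,\neg p_i\}$. Let $(\mathcal{M},w)$ be a pointed Kripke model with $(\mathcal{M},w)\vDash\varphi$, and let $a\in Ag$. Let $S\subseteq At(\varphi)$ be the unique set such that $(\mathcal{M},w)\vDash\bigwedge_{p\in S}\mathsf{h}_a p\wedge\bigwedge_{p\in At(\varphi)\setminus S}\neg\mathsf{h}_a p$, and let $\varphi_S=\bigwedge_{p\in S}\ell(p)$. Then $\mathcal{F}(\varphi)$ and $\mathcal{F}(\varphi_S)$ are both applicable in $(\mathcal{M},w)$. Write $(\mathcal{M},w)\otimes\mathcal{F}(\varphi)=(\mathcal{M}^\varphi,(w,e))$ with $\mathcal{M}^\varphi=(W^\varphi,R^\varphi,V^\varphi)$, and $(\mathcal{M},w)\otimes\mathcal{F}(\varphi_S)=(\mathcal{M}^{\varphi_S},(w,e'))$ with $\mathcal{M}^{\varphi_S}=(W^{\varphi_S},R^{\varphi_S},V^{\varphi_S})$. Then: (1) $R^\varphi_a[(w,e)]=R^{\varphi_S}_a[(w,e')]$; (2) for every $(v,f)\in R^\varphi_a[(w,e)]$, the pointed models $(\mathcal{M}^\varphi,(v,f))$ and $(\mathcal{M}^{\varphi_S},(v,f))$ are bisimilar.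
   Context: $Ag$ is a finite set of agents and $At$ a finite set of propositional atoms. $H=\{\mathsf{h}_a p: a\in Ag, p\in At\}$ is the set of attention atoms; $\mathsf{h}_a p$ reads ''$a$ pays attention to whether $p$''. Language $\mathcal{L}$: $\varphi::=\top\mid p\mid \mathsf{h}_a p\mid\neg\varphi\mid\varphi\wedge\varphi\mid B_a\varphi\mid[\mathcal{E}]\varphi$, with $\mathcal{E}$ a multi-pointed event model. $At(\varphi)$ is the set of atoms of $At$ occurring in $\varphi$. Conjunctions of literals: - Literals are atoms in $At\cup H\cup\{\top\}$ or their negations. - Conjunctions of literals are kept in a normal form: each atom occurs at most once; $\top$ is not a conjunct unless the formula is $\top$; the order is fixed. The empty conjunction is $\top$. - For a conjunction of literals $e$, ''$\ell\in e$'' means $\ell$ is a conjunct of $e$. Kripke models: - A Kripke model is $\mathcal{M}=(W,R,V)$ with $W$ finite nonempty, $R_a\subseteq W^2$ for each $a$, and $V:W\to\mathcal{P}(At\cup H)$. - For a relation $R_a$ and a state $x$, $R_a[x]=\{y:(x,y)\in R_a\}$. Event models: - An event model is $(E,Q,pre)$ with $E$ finite nonempty, $Q_a\subseteq E^2$ for each $a$, and $pre:E\to\mathcal{L}$. A multi-pointed event model adds $E_d\subseteq E$. - Product update: $\mathcal{M}\otimes\mathcal{E}=(W',R',V')$ where $W'=\{(w,e):(\mathcal{M},w)\vDash pre(e)\}$, $R'_a=\{((w,e),(v,f))\in W'^2:(w,v)\in R_a,(e,f)\in Q_a\}$, and $V'((w,e))=V(w)$. - $(\mathcal{E},E_d)$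 is applicable in $(\mathcal{M},w)$ iff there is a unique $e\in E_d$ with $(\mathcal{M},w)\vDash pre(e)$. In that case $(\mathcal{M},w)\otimes(\mathcal{E},E_d)=(\mathcal{M}\otimes\mathcal{E},(w,e))$. Satisfaction: - $q\in At\cup H$ holds at $w$ iff $q\in V(w)$; Boolean connectives are standard. - $B_a\varphi$ holds at $w$ iff $\varphi$ holds at all $R_a$-successors of $w$. - $[\mathcal{E}]\varphi$ holds at $(\mathcal{M},w)$ iff, if $\mathcal{E}$ is applicable in $(\mathcal{M},w)$, then $(\mathcal{M},w)\otimes\mathcal{E}\vDash\varphi$. Propositional attention event model $\mathcal{F}(\varphi)$, for $\varphi=\ell(p_1)\wedge\dots\wedge\ell(p_n)$ as in the claim (including $\varphi=\top$ when $n=0$): - It is $((E,Q,id_E),E_d)$, so each event is a formula and is its own precondition. - Events: $E$ is the set of all normal-form conjunctions $\bigwedge_{p\in S'}\ell(p)\wedge\bigwedge_{b\in Ag}\big(\bigwedge_{p\in X_b}\mathsf{h}_b p\wedge\bigwedge_{p\in S'\setminus X_b}\neg\mathsf{h}_b p\big)$, for $S'\subseteq At(\varphi)$ and $X_b\subseteq S'$ for each $b\in Ag$. - Relations: $(e,f)\in Q_b$ iff for all $p\in At(\varphi)$ both of the following hold: - (Attentiveness) if $\mathsf{h}_b p\in e$ then $\mathsf{h}_b p\in f$ and $\ell(p)\in f$; - (Inertia) if $\mathsf{h}_b p\notin e$ then $\ell(p)\notin f$. - Designated events: $E_d$ is the set of events containing every literal of $\varphi$. Bisimulation is the standard notion for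 Kripke models over all agents in $Ag$ and atoms in $At\cup H$: agreement on atoms, plus forth and back conditions for each $R_a$. *)

From mathcomp Require Import all_boot.
Unset Implicit Arguments.

Unset Printing Implicit Defensive.

Section DEL.
Variables (Ag At : finType).

(* Atoms of At ∪ H : [inl p] is the propositional atom p,
   [inr (a,p)] is the attention atom h_a p. *)
Definition atom : finType := (At + Ag * At)%type.

(* The language L.  The event model in [Upd] is given syntactically:
   events are 0..ne (so there are ne+1 >= 1 of them), relations Q,
   preconditions pre (a map events -> L), designated events Ed. *)
Inductive form : Type :=
| Top : form
| PAt : At -> form
| HAt : Ag -> At -> form
| Neg : form -> form
| Conj : form -> form -> form
| Bel : Ag -> form -> form
| Upd : forall (ne : nat) (Q : Ag -> nat -> nat -> bool) (pre : nat -> form)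
               (Ed : nat -> bool), form -> form.

Record kmodel := KModel {
  W : Type;
  R : Ag -> W -> W -> Prop;
  V : W -> atom -> Prop }.

(* W finite (nonemptiness is witnessed by the point of a pointed model). *)
Definition is_kripke (M : kmodel) : Prop :=
  exists (n : nat) (f : 'I_n -> W M), forall x, exists i, f i = x.

Definition prodP (M : kmodel) (ev : Type) (E : ev -> Prop)
  (Q : Ag -> ev -> ev -> Prop) (P : W M -> ev -> Prop) : kmodel :=
  {| W := {x : W M * ev | E x.2 /\ P x.1 x.2};
     R := fun a s t => R M a (sval s).1 (sval t).1 /\ Q a (sval s).2 (sval t).2;
     V := fun s => V M (sval s).1 |}.

Fixpoint sat (M : kmodel) (w : W M) (f : form) {struct f} : Prop :=
  match f with
  | Top => True
  | PAt p => V M w (inl p)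
  | HAt a p => V M w (inr (a, p))
  | Neg g => ~ sat M w g
  | Conj g h => sat M w g /\ sat M w h
  | Bel a g => forall v, R M a w v -> sat M v g
  | Upd ne Q pre Ed g =>
      forall (i : nat) (Hi : (i <= ne) /\ sat M w (pre i)),
        Ed i ->
        (forall j, j <= ne -> Ed j -> sat M w (pre j) -> j = i) ->
        sat (prodP M nat (fun j => j <= ne) (fun a j k => Q a j k)
                   (fun v j => sat M v (pre j)))
            (exist _ (w, i) Hi) g
  end.

Record mevmodel := MEv {
  ev : Type;
  evE : ev -> Prop;
  evQ : Ag -> ev -> ev -> Prop;
  evpre : ev -> form;
  evD : ev -> Prop }.

Definition update (M : kmodel) (Em : mevmodel) : kmodel :=
  prodP M (ev Em) (evE Em) (evQ Em) (fun v e => sat M v (evpre Em e)).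

Definition applicable (M : kmodel) (w : W M) (Em : mevmodel) : Prop :=
  exists! e, evD Em e /\ sat M w (evpre Em e).

Definition is_point (M : kmodel) (w : W M) (Em : mevmodel)
  (s : W (update M Em)) : Prop :=
  (sval s).1 = w /\ evD Em (sval s).2.

Definition bisimulation (M1 M2 : kmodel) (Z : W M1 -> W M2 -> Prop) : Prop :=
  forall x y, Z x y ->
    (forall q, V M1 x q <-> V M2 y q) /\
    (forall a x', R M1 a x x' -> exists y', R M2 a y y' /\ Z x' y') /\
    (forall a y', R M2 a y y' -> exists x', R M1 a x x' /\ Z x' y').

Definition bisimilar (M1 : kmodel) (x : W M1) (M2 : kmodel) (y : W M2) : Prop :=
  exists Z, bisimulation M1 M2 Z /\ Z x y.

Definition literal : Type := (atom * bool)%type.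

Definition atom_form (q : atom) : form :=
  match q with inl p => PAt p | inr (a, p) => HAt a p end.

Definition lit_form (l : literal) : form :=
  if l.2 then atom_form l.1 else Neg (atom_form l.1).

Fixpoint conj_list (ls : seq literal) : form :=
  match ls with
  | [::] => Top
  | [:: l] => lit_form l
  | l :: ls' => Conj (lit_form l) (conj_list ls')
  end.

Definition lit_le (l1 l2 : literal) : bool :=
  (enum_rank l1.1 <= enum_rank l2.1)%N.

Definition nf (ls : seq literal) : form := conj_list (sort lit_le ls).

Fixpoint conjuncts (f : form) : seq form :=
  match f with
  | Top => [::]
  | Conj g h => g :: conjuncts h
  | _ => [:: f]
  end.

Fixpoint inl_form (f : form) (s : seq form) : Prop :=
  match s with [::] => False | g :: s' => g = f \/ inl_form f s' end.

Definition in_conj (l : literal) (e : form) : Prop := inl_form (lit_form l) (conjuncts e).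

Definition phi_of (ls : seq (At * bool)) : form :=
  nf [seq (inl x.1, x.2) : literal | x <- ls].

Definition atset (ls : seq (At * bool)) : {set At} := [set p | p \in map fst ls].

Definition pol (ls : seq (At * bool)) (p : At) : bool := (p, true) \in ls.

Definition ell (ls : seq (At * bool)) (p : At) : literal := (inl p, pol ls p).

Definition hlit (b : Ag) (p : At) : literal := (inr (b, p), true).

Definition evlits (ls : seq (At * bool)) (S' : {set At}) (X : Ag -> {set At})
  : seq literal :=
  [seq ell ls p | p <- enum S'] ++
  [seq ((inr (b, p), p \in X b) : literal) | b <- enum Ag, p <- enum S'].

Definition Fevent (ls : seq (At * bool)) (e : form) : Prop :=
  exists (S' : {set At}) (X : Ag -> {set At}),
    S' \subset atset ls /\ (forall b, X b \subset S') /\ e = nf (evlits ls S' X).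

Definition FQ (ls : seq (At * bool)) (b : Ag) (e f : form) : Prop :=
  forall p, p \in atset ls ->
    (in_conj (hlit b p) e -> in_conj (hlit b p) f /\ in_conj (ell ls p) f) /\
    (~ in_conj (hlit b p) e -> ~ in_conj (ell ls p) f).

Definition FD (ls : seq (At * bool)) (e : form) : Prop :=
  Fevent ls e /\ forall p, p \in atset ls -> in_conj (ell ls p) e.

Definition Fmodel (ls : seq (At * bool)) : mevmodel :=
  {| ev := form; evE := Fevent ls; evQ := FQ ls; evpre := id; evD := FD ls |}.

Definition hconj (ls : seq (At * bool)) (a : Ag) (S : {set At}) : form :=
  nf ([seq ((inr (a, p), true) : literal) | p <- enum S] ++
      [seq ((inr (a, p), false) : literal) | p <- enum (atset ls :\: S)]).

End DEL.

Arguments Top {Ag At}.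
Arguments W {Ag At} k.
Arguments R {Ag At} k _ _ _.
Arguments V {Ag At} k _ _.
Arguments is_kripke {Ag At} M.
Arguments sat {Ag At} M w f.
Arguments update {Ag At} M Em.
Arguments applicable {Ag At} M w Em.
Arguments is_point {Ag At} M w Em s.
Arguments bisimilar {Ag At} M1 x M2 y.
Arguments phi_of {Ag At} ls.
Arguments atset {At} ls.
Arguments Fmodel {Ag At} ls.
Arguments hconj {Ag At} ls a S.

From Pilot Require Import Defs.
From mathcomp Require Import all_boot.
From Stdlib Require Import ClassicalEpsilon.

(* F(φ_S) consists of exactly those events of F(φ) whose ℓ-literals concern only
   atoms of S, with the same relations there.  Since a attends at w exactly to S,
   attentiveness and inertia force every Q_a-successor of either designated event
   into this common part, and inertia keeps it closed under all successors.  So the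
   a-successors of the two points coincide as pairs (v, f), and equality of the
   underlying pairs is a bisimulation. *)

Set Implicit Arguments.

Section Conjunctions.
Context {Ag At : finType}.
Implicit Types (l : literal Ag At) (s : seq (literal Ag At)).

Lemma conjuncts_lit_form l : conjuncts Ag At (lit_form Ag At l) = [:: lit_form Ag At l].
Proof. by case: l => [[p|[b p]] []]. Qed.

Lemma conjuncts_conj_list s :
  conjuncts Ag At (conj_list Ag At s) = map (lit_form Ag At) s.
Proof.
elim: s => [|l [|l' s] IH] //; first exact: conjuncts_lit_form.
by rewrite [conj_list _ _ _]/= [conjuncts _ _ _]/= IH.
Qed.

Lemma lit_form_inj : injective (lit_form Ag At).
Proof. by move=> [[p|[b p]] []] [[q|[c q]] []] //= [] -> //= ->. Qed.

Lemma inl_form_map_lit l s :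
  inl_form Ag At (lit_form Ag At l) (map (lit_form Ag At) s) <-> l \in s.
Proof.
elim: s => [|l' s IH] //=; rewrite in_cons; split.
- by case=> [/lit_form_inj ->|/IH ->]; rewrite ?eqxx ?orbT.
- by case/orP=> [/eqP ->|/IH]; [left|right].
Qed.

Lemma in_conj_nf l s : in_conj Ag At l (nf Ag At s) <-> l \in s.
Proof. by rewrite /in_conj /nf conjuncts_conj_list inl_form_map_lit mem_sort. Qed.

Variables (M : kmodel Ag At) (w : W M).

Lemma sat_lit_form q (c : bool) :
  sat M w (lit_form Ag At (q, c)) <-> (if c then V M w q else ~ V M w q).
Proof. by case: c; case: q => [p|[b p]]. Qed.

Lemma sat_conj_list s :
  sat M w (conj_list Ag At s) <-> forall l, l \in s -> sat M w (lit_form Ag At l).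
Proof.
elim: s => [|l [|l' s] IH] //.
  by split=> [H l'|]; [rewrite mem_seq1 => /eqP -> | apply; rewrite mem_seq1].
rewrite [conj_list _ _ _]/= [sat _ _ _]/= IH; split.
- by case=> Hl Hs l''; rewrite in_cons => /orP[/eqP ->|/Hs].
- by move=> H; split=> [|l'' Hl'']; apply: H; rewrite in_cons ?eqxx ?Hl'' ?orbT.
Qed.

Lemma sat_nf s :
  sat M w (nf Ag At s) <-> forall l, l \in s -> sat M w (lit_form Ag At l).
Proof. by rewrite sat_conj_list; split=> H l Hl; apply: H; rewrite ?mem_sort in Hl *. Qed.

End Conjunctions.

Section AttentionEvents.
Context {Ag At : finType} (ls : seq (At * bool)).
Local Notation ell := (ell Ag At ls).
Local Notation hlit := (hlit Ag At).
Local Notation in_conj := (in_conj Ag At).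
Local Notation evlits := (evlits Ag At ls).
Local Notation Fevent := (Fevent Ag At ls).

Lemma mem_evlits (S' : {set At}) (X : Ag -> {set At}) (l : literal Ag At) :
  l \in evlits S' X <->
  (exists2 p, p \in S' & l = ell p) \/
  (exists b p, p \in S' /\ l = ((inr (b, p), p \in X b) : literal Ag At)).
Proof.
rewrite mem_cat; split.
- case/orP=> [/mapP[p] | /allpairsP[[b p] [_ /=]]]; rewrite mem_enum => Hp ->.
    by left; exists p.
  by right; exists b, p.
- case=> [[p Hp ->] | [b [p [Hp ->]]]]; first by rewrite map_f // mem_enum.
  by apply/orP; right; apply/allpairsP; exists (b, p); rewrite /= !mem_enum.
Qed.

Lemma mem_evlits_attention (S' : {set At}) (X : Ag -> {set At}) b p : p \in S' ->
  ((inr (b, p), p \in X b) : literal Ag At) \in evlits S' X.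
Proof. by move=> Hp; apply/mem_evlits; right; exists b, p. Qed.

Lemma in_conj_ell_evlits (S' : {set At}) X p :
  in_conj (ell p) (nf Ag At (evlits S' X)) <-> p \in S'.
Proof.
rewrite in_conj_nf mem_evlits /Defs.ell.
by split=> [[[q Hq [->]] | [b [q [_ []]]]] // | Hp]; left; exists p.
Qed.

Lemma in_conj_hlit_evlits (S' : {set At}) X b p :
  in_conj (hlit b p) (nf Ag At (evlits S' X)) <-> p \in S' /\ p \in X b.
Proof.
rewrite in_conj_nf mem_evlits /Defs.hlit /Defs.ell.
split=> [[[q _ []] | [b' [q [Hq [-> -> HX]]]]] | [Hp HX]] //.
by right; exists b, p; rewrite HX.
Qed.

Lemma Fevent_attention_ell f b p :
  Fevent f -> in_conj (hlit b p) f -> in_conj (ell p) f.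
Proof.
by case=> S' [X [_ [_ ->]]]; rewrite in_conj_hlit_evlits in_conj_ell_evlits => -[].
Qed.

Lemma Fevent_ell_atset f p : Fevent f -> in_conj (ell p) f -> p \in atset ls.
Proof. by case=> S' [X [HS' [_ ->]]]; rewrite in_conj_ell_evlits; apply: subsetP. Qed.

Lemma sat_Fevent_attention (b : Ag) {M : kmodel Ag At} {v : W M} {f p} :
  Fevent f -> sat M v f -> in_conj (ell p) f ->
  (in_conj (hlit b p) f <-> V M v (inr (b, p))).
Proof.
case=> S' [X [_ [_ ->]]]; rewrite sat_nf in_conj_ell_evlits in_conj_hlit_evlits.
move=> Hsat Hp.
have /Hsat := mem_evlits_attention X b Hp.
by rewrite sat_lit_form; case: (p \in X b); split=> // -[].
Qed.

End AttentionEvents.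

Lemma uniq_fst_inj {T1 T2 : eqType} {s : seq (T1 * T2)} :
  uniq (map fst s) -> {in s &, injective fst}.
Proof.
elim: s => //= z s IH /andP[Hz /IH Hinj] x y.
rewrite !in_cons => /orP[/eqP->|Hx] /orP[/eqP->|Hy] Exy //.
- by rewrite Exy map_f in Hz.
- by rewrite -Exy map_f in Hz.
- exact: Hinj.
Qed.

Lemma pol_uniq {At : finType} {ls : seq (At * bool)} {p c} :
  uniq (map fst ls) -> (p, c) \in ls -> pol At ls p = c.
Proof.
move=> Hu Hpc; rewrite /pol; case: c Hpc => // Hpc.
by apply/negP => /(uniq_fst_inj Hu _ _ Hpc)/(_ erefl).
Qed.

Definition decide (P : Prop) : bool := if excluded_middle_informative P then true else false.

Lemma decideP (P : Prop) : reflect P (decide P).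
Proof. by rewrite /decide; case: excluded_middle_informative => H; constructor. Qed.

Section Applicability.
Context {Ag At : finType} (M : kmodel Ag At) (w : W M) (ls : seq (At * bool)).
Hypothesis uniq_ls : uniq (map fst ls).

Lemma sat_phi_ell p : sat M w (phi_of ls) -> p \in atset ls ->
  sat M w (lit_form Ag At (ell Ag At ls p)).
Proof.
rewrite /phi_of sat_nf => Hphi; rewrite inE => /mapP[[q c] Hqc /= ->].
rewrite /Defs.ell (pol_uniq uniq_ls Hqc); apply: Hphi.
by apply/mapP; exists (q, c).
Qed.

(* The designated event satisfied at [w] has [S' = At(φ)] and [X b] the atoms that
   [b] attends to at [w]; a satisfied event must record each [h_b p], hence uniqueness. *)
Lemma Fmodel_applicable : sat M w (phi_of ls) -> applicable M w (Fmodel ls).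
Proof.
move=> Hphi.
pose X b := [set p in atset ls | decide (V M w (inr (b, p)))].
exists (nf Ag At (evlits Ag At ls (atset ls) X)); split.
  split; last first.
    rewrite /= sat_nf => l /mem_evlits [[p Hp ->] | [b [p [Hp ->]]]].
      exact: sat_phi_ell.
    by rewrite sat_lit_form inE Hp; case: decideP.
  split; last by move=> p Hp; rewrite in_conj_ell_evlits.
  exists (atset ls), X; do 2!split => //.
  by move=> b; apply/subsetP => p; rewrite inE => /andP[].
move=> e [[[S' [X' [HS' [HX' ->]]]] Hall] /=].
have -> : S' = atset ls.
  apply/eqP; rewrite eqEsubset HS'; apply/subsetP => p /Hall.
  by rewrite in_conj_ell_evlits.
rewrite sat_nf => Hsat; congr (nf _ _ (_ ++ _)).
apply/eq_in_allpairs => b p _; rewrite mem_enum => Hp; congr (_, _).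
have /Hsat := mem_evlits_attention ls X' b Hp.
by rewrite sat_lit_form inE Hp; case: (p \in X' b); case: decideP.
Qed.

End Applicability.

Section Restriction.
Context {Ag At : finType} (ls : seq (At * bool)) (S : {set At}).
Local Notation lsS := [seq x <- ls | x.1 \in S].
Local Notation ell := (ell Ag At).
Local Notation hlit := (hlit Ag At).
Local Notation in_conj := (in_conj Ag At).
Local Notation Fevent := (Fevent Ag At).
Local Notation FQ := (FQ Ag At).

Lemma uniq_filter_fst : uniq (map fst ls) -> uniq (map fst lsS).
Proof. by apply: subseq_uniq; apply/map_subseq/filter_subseq. Qed.

Lemma sat_phi_filter (M : kmodel Ag At) w : sat M w (phi_of ls) -> sat M w (phi_of lsS).
Proof.
rewrite /phi_of !sat_nf => Hphi l /mapP[x]; rewrite mem_filter => /andP[_ Hx] ->.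
by apply: Hphi; apply/mapP; exists x.
Qed.

Lemma ell_filter p : p \in S -> ell lsS p = ell ls p.
Proof. by move=> Hp; rewrite /Defs.ell /pol mem_filter Hp. Qed.

Lemma evlits_filter (S' : {set At}) X : S' \subset S ->
  evlits Ag At lsS S' X = evlits Ag At ls S' X.
Proof.
move=> /subsetP HS'; congr (_ ++ _); apply/eq_in_map => p.
by rewrite mem_enum => /HS' /ell_filter.
Qed.

Hypothesis S_sub : S \subset atset ls.

Lemma atset_filter : atset lsS = S.
Proof.
apply/setP => p; rewrite inE; apply/mapP/idP => [[x] | Hp].
  by rewrite mem_filter => /andP[Hx _] ->.
have := subsetP S_sub p Hp; rewrite inE => /mapP[x Hx Ep].
by exists x; rewrite // mem_filter -Ep Hp.
Qed.

Definition ell_within (f : form Ag At) : Prop :=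
  forall p, p \notin S -> ~ in_conj (ell ls p) f.

Lemma Fevent_filter f : Fevent lsS f <-> Fevent ls f /\ ell_within f.
Proof.
split=> [[S' [X [HS' [HX ->]]]] | [[S' [X [HS' [HX ->]]]] Hwithin]].
  rewrite atset_filter in HS'; rewrite evlits_filter //; split.
    by exists S', X; rewrite (subset_trans HS' S_sub).
  by move=> p /negP HpS /in_conj_ell_evlits Hp; apply/HpS/(subsetP HS').
have HS'S : S' \subset S.
  apply/subsetP => p Hp; apply/negPn/negP => /Hwithin; apply.
  by rewrite in_conj_ell_evlits.
by exists S', X; rewrite atset_filter evlits_filter.
Qed.

(* By inertia, the [F(φ)]-successors of an event of [F(φ_S)] never contain
   [ℓ(p)] for [p ∉ S]. *)
Lemma Fevent_filter_successor b f g : Fevent lsS f ->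
  (Fevent ls g /\ FQ ls b f g) <-> (Fevent lsS g /\ FQ lsS b f g).
Proof.
case/Fevent_filter=> Hf Hwithin; split=> [[Hg HQ] | [/Fevent_filter[Hg Hgwithin] HQ]].
  have Hgwithin : ell_within g.
    move=> p HpS; have [Hp|Hp] := boolP (p \in atset ls).
      by apply: (HQ p Hp).2 => /(Fevent_attention_ell _ _ Hf); apply: Hwithin.
    by move/(Fevent_ell_atset _ Hg); apply/negP.
  split; first exact/Fevent_filter.
  move=> p; rewrite atset_filter => HpS; rewrite ell_filter //.
  exact/HQ/(subsetP S_sub).
split=> // p Hp; have [HpS|HpS] := boolP (p \in S).
  by move: (HQ p); rewrite atset_filter ell_filter //; apply.
split=> [/(Fevent_attention_ell _ _ Hf) /(Hwithin _ HpS) [] | _].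
exact: Hgwithin.
Qed.

Variables (M : kmodel Ag At) (w : W M) (a : Ag).
Hypothesis attention_S : forall p, p \in atset ls -> V M w (inr (a, p)) <-> p \in S.

Definition attends_within (f : form Ag At) : Prop :=
  forall p, p \in S -> in_conj (hlit a p) f /\ in_conj (ell ls p) f.

Lemma FQ_designated e f : FD Ag At ls e -> sat M w e -> Fevent ls f ->
  FQ ls a e f <-> attends_within f /\ ell_within f.
Proof.
move=> [He Hall] Hsat Hf.
have attn_e p : p \in atset ls -> in_conj (hlit a p) e <-> p \in S.
  by move=> Hp; rewrite (sat_Fevent_attention a He Hsat (Hall p Hp)); apply: attention_S.
split=> [HQ | [Hattn Hwithin] p Hp].
  split=> [p HpS | p HpS].
    by have Hp := subsetP S_sub p HpS; apply: (HQ p Hp).1; apply/attn_e.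
  have [Hp|Hp] := boolP (p \in atset ls).
    by apply: (HQ p Hp).2; rewrite attn_e // (negbTE HpS).
  by move/(Fevent_ell_atset _ Hf); apply/negP.
split; first by move/(attn_e p Hp)/Hattn.
by move=> Hna; apply: Hwithin; apply/negP => /(attn_e p Hp).
Qed.

Lemma FQ_designated_filter e f : FD Ag At lsS e -> sat M w e ->
  FQ lsS a e f <-> attends_within f.
Proof.
move=> [He Hall] Hsat.
have attn_e p : p \in S -> in_conj (hlit a p) e.
  move=> HpS; have Hp : p \in atset lsS by rewrite atset_filter.
  rewrite (sat_Fevent_attention a He Hsat (Hall p Hp)).
  exact/(attention_S (subsetP S_sub p HpS)).
split=> [HQ p HpS | Hattn p].
  rewrite -ell_filter //; apply: (HQ p _).1 (attn_e p HpS).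
  by rewrite atset_filter.
rewrite atset_filter => HpS; rewrite ell_filter //.
by split=> [_ | []]; [apply: Hattn | apply: attn_e].
Qed.

Lemma designated_successors e e' f :
  FD Ag At ls e -> sat M w e -> FD Ag At lsS e' -> sat M w e' ->
  (Fevent ls f /\ FQ ls a e f) <-> (Fevent lsS f /\ FQ lsS a e' f).
Proof.
move=> HD Hsat HD' Hsat'; rewrite Fevent_filter.
split=> [[Hf] | [[Hf Hwithin]]].
  by rewrite (FQ_designated HD Hsat Hf) (FQ_designated_filter _ HD' Hsat') => -[].
by rewrite (FQ_designated_filter _ HD' Hsat') (FQ_designated HD Hsat Hf).
Qed.

End Restriction.

Lemma sat_hconj {Ag At : finType} (M : kmodel Ag At) w ls a (S : {set At}) :
  sat M w (hconj ls a S) ->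
  forall p, p \in atset ls -> V M w (inr (a, p)) <-> p \in S.
Proof.
rewrite /hconj sat_nf; set hs := _ ++ _ => Hh p Hp; split=> [HV | HpS].
  apply/negPn/negP => HpS.
  have /Hh : ((inr (a, p), false) : literal Ag At) \in hs.
    by rewrite mem_cat map_f ?orbT // mem_enum in_setD HpS Hp.
  by rewrite sat_lit_form.
have /Hh : ((inr (a, p), true) : literal Ag At) \in hs.
  by rewrite mem_cat map_f // mem_enum.
by rewrite sat_lit_form.
Qed.

Section ProductComparison.
Context {Ag At : finType} (M : kmodel Ag At) (T : Type) (P : W M -> T -> Prop).
Variables (E1 E2 : T -> Prop) (Q1 Q2 : Ag -> T -> T -> Prop).
Local Notation M1 := (prodP Ag At M T E1 Q1 P).
Local Notation M2 := (prodP Ag At M T E2 Q2 P).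

Lemma prodP_successors a (s : W M1) (s' : W M2) :
  (sval s).1 = (sval s').1 ->
  (forall f, E1 f /\ Q1 a (sval s).2 f <-> E2 f /\ Q2 a (sval s').2 f) ->
  forall x, (exists t, R M1 a s t /\ sval t = x) <-> (exists t', R M2 a s' t' /\ sval t' = x).
Proof.
move=> Es HQ x; split.
  move=> [[[v f] [Hf Hv]] [[HR /(conj Hf)/HQ[Hf' HQf']] <-]].
  by exists (exist _ (v, f) (conj Hf' Hv)); split=> //; split=> //=; rewrite -Es.
move=> [[[v f] [Hf' Hv]] [[HR /(conj Hf')/HQ[Hf HQf]] <-]].
by exists (exist _ (v, f) (conj Hf Hv)); split=> //; split=> //=; rewrite Es.
Qed.

Lemma prodP_bisimulation :
  (forall f, E2 f -> forall b g, E1 g /\ Q1 b f g <-> E2 g /\ Q2 b f g) ->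
  bisimulation Ag At M1 M2 (fun x y => sval x = sval y).
Proof.
move=> HQ [[u f] [Hf Hu]] [[u' f'] [Hf' Hu']] /= [<- Eff]; move: Hf' Hu'.
rewrite -{}Eff => Hf' Hu'; split=> //; split=> b.
  move=> [[v g] [Hg Hv]] [HR /(conj Hg)/(HQ f Hf')[Hg' HQ']].
  by exists (exist _ (v, g) (conj Hg' Hv)).
move=> [[v g] [Hg' Hv]] [HR /(conj Hg')/(HQ f Hf')[Hg HQ']].
by exists (exist _ (v, g) (conj Hg Hv)).
Qed.

End ProductComparison.

Theorem lemma4p1 (Ag At : finType) (ls : seq (At * bool))
  (M : kmodel Ag At) (w : W M) (a : Ag) (S : {set At}) :
  uniq (map fst ls) ->
  is_kripke M ->
  sat M w (phi_of ls) ->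
  S \subset atset ls ->
  sat M w (hconj ls a S) ->
  let Fphi : mevmodel Ag At := Fmodel ls in
  let FphiS : mevmodel Ag At := Fmodel [seq x <- ls | x.1 \in S] in
  applicable M w Fphi /\ applicable M w FphiS /\
  forall (s : W (update M Fphi)) (s' : W (update M FphiS)),
    is_point M w Fphi s -> is_point M w FphiS s' ->
    (forall x : W M * form Ag At,
        (exists t, R (update M Fphi) a s t /\ sval t = x) <->
        (exists t', R (update M FphiS) a s' t' /\ sval t' = x)) /\
    (forall t t', R (update M Fphi) a s t -> sval t = sval t' ->
        bisimilar (update M Fphi) t (update M FphiS) t').
Proof.
move=> uniq_ls _ Hphi S_sub /sat_hconj attention_S Fphi FphiS.
split; first exact: Fmodel_applicable.
split; first exact/Fmodel_applicable/sat_phi_filter/Hphi/uniq_filter_fst.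
move=> s s' [Hs HD] [Hs' HD']; split.
  apply: prodP_successors; first by rewrite Hs Hs'.
  move: (proj2 (svalP s)) (proj2 (svalP s')); rewrite /= Hs Hs' => Hsat Hsat' f.
  exact (designated_successors S_sub M w a attention_S f HD Hsat HD' Hsat').
move=> t t' _ Ett'; exists (fun x y => sval x = sval y); split=> //.
apply: prodP_bisimulation => f Hf b g.
exact (Fevent_filter_successor S_sub b g Hf).
Qed.
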